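(* If $\mathfrak{g}$ is either atom or loose guards, then for $k>0$ and $\sigma$-structures $\mathcal{A},\mathcal{B}$, there is a bijective correspondence between (1) coKleisli morphisms ($\sigma$-homomorphisms) $\mathbb{G}_{k}^{\mathfrak{g}} \mathcal{A} \to \mathcal{B}$, and (2) winning strategies for Duplicator in the $\mathfrak{g}$-guarded $k$-bounded simulation game from $\mathcal{A}$ to $\mathcal{B}$. Thus $\mathcal{A} \preceq^{\mathfrak{g}}_{k} \mathcal{B}$ iff there is a homomorphism $\mathbb{G}_{k}^{\mathfrak{g}} \mathcal{A} \to \mathcal{B}$.
   Context: A set is $k$-guarded (atom/loose) if contained in the support of a tuple of length at most $k$ satisfying an atom/loose guard. $\mathbb{G}_k^{\mathfrak{g}}\mathcal{A}$ is the $\sigma$-structure whose universe consists of equivalence classes $[p,a]$ of focussed plays $\langle p,a\rangle$, where $p=[U_1,\ldots,U_n]$ is a non-empty list of $k$-guarded $\mathfrak{g}$-guarded sets of $\mathcal{A}$ and $a\in U_n$; $\langle p,a\rangle\sim\langle q,a'\rangle$ iff $a=a'$, the greatest common prefix $p\sqcap q$ is non-empty, and $a$ lies in the last element of every play on the prefix-order paths from $p\sqcap q$ to $p$ and to $q$; $R^{\mathbb{G}_k\mathcal{A}} = \{([p,a_1],\ldots,[p,a_r]) \mid R^{\mathcal{A}}(a_1,\ldots,a_r)\}$. The $k$-bounded $\mathfrak{g}$-guarded simulation game from $\mathcal{A}$ to $\mathcal{B}$: starting with $X_0=\varnothing,\varphi_0=\varnothing$, in each round Spoiler picks a $k$-guarded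 set $X_{n+1}$ in $\mathcal{A}$ and Duplicator responds with a $k$-guarded set $Y_{n+1}$ in $\mathcal{B}$ and a partial homomorphism $\varphi_{n+1}:X_{n+1}\to Y_{n+1}$ agreeing with $\varphi_n$ on $X_{n+1}\cap X_n$; Duplicator wins if he can always respond. $\mathcal{A}\preceq^{\mathfrak{g}}_k\mathcal{B}$ means Duplicator has a winning strategy. *)

From mathcomp Require Import all_boot.
From Stdlib Require Import ClassicalEpsilon.

Set Implicit Arguments.
Unset Strict Implicit.
Unset Printing Implicit Defensive.

Section Defs.

Variables (Sym : Type) (ar : Sym -> nat).

Record structure := Structure {
  carrier :> Type;
  rel : forall R : Sym, ('I_(ar R) -> carrier) -> Prop }.
Arguments rel s R _ : clear implicits.
Arguments rel {s} R _.

Definition is_hom (S T : structure) (h : S -> T) : Prop :=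
  forall (R : Sym) (t : 'I_(ar R) -> S), rel R t -> rel R (fun i => h (t i)).

Definition hom (S T : structure) : Type := {h : S -> T | is_hom h}.

Inductive guard := AtomGuard | LooseGuard.

Definition supp (A : Type) (n : nat) (t : 'I_n -> A) : A -> Prop :=
  fun x => exists i, t i = x.

(* A tuple t satisfies an atom guard alpha(x_1..x_n) (an atomic formula,
   possibly an equality, in which exactly the variables x_1..x_n occur):
   either it is an equality atom (support a singleton), or a relational atom
   R(y_1..y_m) with {y_j} = {x_i}. *)
Definition atom_guarded (A : structure) (n : nat) (t : 'I_n -> A) : Prop :=
  (exists a : A, forall x, supp t x <-> x = a) \/
  (exists (R : Sym) (b : 'I_(ar R) -> A),
      rel R b /\ forall x, supp b x <-> supp t x).

(* A tuple t satisfies a loose guard: a conjunction of atoms over the variables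
   x_1..x_n in which every pair of variables co-occurs in some conjunct
   (equality atoms allowed). *)
Definition loose_guarded (A : structure) (n : nat) (t : 'I_n -> A) : Prop :=
  forall i j : 'I_n, t i = t j \/
    exists (R : Sym) (b : 'I_(ar R) -> A),
      [/\ rel R b, (forall x, supp b x -> supp t x), supp b (t i) & supp b (t j)].

Definition guarded_tuple (g : guard) (A : structure) (n : nat) (t : 'I_n -> A) :=
  match g with
  | AtomGuard => atom_guarded t
  | LooseGuard => loose_guarded t
  end.

Definition kguarded (g : guard) (k : nat) (A : structure) (X : A -> Prop) : Prop :=
  exists (n : nat) (t : 'I_n -> A),
    n <= k /\ guarded_tuple g t /\ forall x, X x -> supp t x.

Definition lastS (A : Type) (p : seq (A -> Prop)) : A -> Prop :=
  last (fun _ => False) p.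

Definition isplay (g : guard) (k : nat) (A : structure) (p : seq (A -> Prop)) : Prop :=
  p <> [::] /\ List.Forall (@kguarded g k A) p.

Fixpoint gcp (T : Type) (p q : seq T) : seq T :=
  match p, q with
  | x :: p', y :: q' =>
      if excluded_middle_informative (x = y) then x :: gcp p' q' else [::]
  | _, _ => [::]
  end.

Definition on_path (A : Type) (r p : seq (A -> Prop)) (a : A) : Prop :=
  forall i, size r <= i <= size p -> lastS (take i p) a.

Definition sim (A : Type) (pa qa : seq (A -> Prop) * A) : Prop :=
  [/\ pa.2 = qa.2, gcp pa.1 qa.1 <> [::],
      on_path (gcp pa.1 qa.1) pa.1 pa.2 & on_path (gcp pa.1 qa.1) qa.1 qa.2].

Definition fplay (g : guard) (k : nat) (A : structure) : Type :=
  {pa : seq (A -> Prop) * A | isplay g k pa.1 /\ lastS pa.1 pa.2}.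

Definition cls (g : guard) (k : nat) (A : structure) (x : fplay g k A) :
  fplay g k A -> Prop := fun y => sim (sval x) (sval y).

Definition Gcarrier (g : guard) (k : nat) (A : structure) : Type :=
  {C : fplay g k A -> Prop | exists x, C = cls x}.

Definition Grel (g : guard) (k : nat) (A : structure) (R : Sym)
  (c : 'I_(ar R) -> Gcarrier g k A) : Prop :=
  exists (p : seq (A -> Prop)) (a : 'I_(ar R) -> A)
         (H : forall i, isplay g k p /\ lastS p (a i)),
    (forall i, sval (c i) = cls (exist _ (p, a i) (H i) : fplay g k A))
    /\ rel R a.

Definition GG (g : guard) (k : nat) (A : structure) : structure :=
  @Structure (Gcarrier g k A) (@Grel g k A).

(* Strategies for Duplicator in the k-bounded g-guarded simulation game from
   A to B: to each non-empty sequence of Spoiler moves p = [X_1,...,X_n]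
   (a play) Duplicator assigns a map phi_p on X_n (= last p). *)
Definition play (g : guard) (k : nat) (A : structure) : Type :=
  {p : seq (A -> Prop) | isplay g k p}.

Definition strategy (g : guard) (k : nat) (A B : structure) : Type :=
  forall (p : play g k A) (a : A), lastS (sval p) a -> B.

(* A strategy is winning iff it always provides a legal response:
   phi_p is a partial homomorphism X_n -> Y_n for some k-guarded Y_n in B,
   agreeing with phi_{p'} on X_n cap X_{n-1} when p = p' ++ [X_n]. *)
Definition winning (g : guard) (k : nat) (A B : structure) (s : strategy g k A B)
  : Prop :=
  [/\ (forall p : play g k A,
         exists Y : B -> Prop, @kguarded g k B Y /\
           forall a (Ha : lastS (sval p) a), Y (s p a Ha)),
      (forall (p : play g k A) (R : Sym) (t : 'I_(ar R) -> A)
              (Ht : forall i, lastS (sval p) (t i)),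
         rel R t -> rel R (fun i => s p (t i) (Ht i)))
    & (forall (p p' : play g k A) (X : A -> Prop),
         sval p' = rcons (sval p) X ->
         forall a (Ha : lastS (sval p) a) (Ha' : lastS (sval p') a),
           s p' a Ha' = s p a Ha)].

Definition wstrat (g : guard) (k : nat) (A B : structure) : Type :=
  {s : strategy g k A B | winning s}.

Definition simulates (g : guard) (k : nat) (A B : structure) : Prop :=
  inhabited (wstrat g k A B).

End Defs.

From Pilot Require Import Defs.
From mathcomp Require Import all_boot zify.
From Stdlib Require Import ClassicalEpsilon ProofIrrelevance FunctionalExtensionality PropExtensionality.

Set Implicit Arguments.
Unset Strict Implicit.
Unset Printing Implicit Defensive.

(* A winning strategy answers a focussed play <p, a> by some phi_p(a); the
   coherence condition propagates this answer unchanged along any chain of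
   prefixes whose last sets all contain a.  Two ~-equivalent focussed plays are
   joined by such chains through their greatest common prefix, so the answer is
   a function of the class [p, a], and it preserves relations because the
   related elements of G A all come from one play.  Conversely a homomorphism h
   answers <p, a> by h [p, a]: appending a move X containing a does not change
   the class [p, a], and the answers on the last set of p are guarded because
   the tuple guarding that set can itself be played as the next move, after
   which h maps the relational atoms of its guard to relational atoms of B. *)

Lemma sval_inj (T : Type) (P : T -> Prop) : injective (@sval T P).
Proof. exact: eq_sig_hprop (fun x => @proof_irrelevance (P x)). Qed.

Section GreatestCommonPrefix.
Variable T : Type.
Implicit Types p q s : seq T.

Lemma gcpC p q : gcp p q = gcp q p.
Proof.
elim: p q => [|x p IH] [|y q] //=.
case: (excluded_middle_informative (x = y)) => [e_xy|ne_xy];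
  case: (excluded_middle_informative (y = x)) => [e_yx|ne_yx] //=.
- by rewrite IH e_xy.
- by case: (ne_yx (esym e_xy)).
- by case: (ne_xy (esym e_yx)).
Qed.

Lemma gcp_takel p q : gcp p q = take (size (gcp p q)) p.
Proof.
elim: p q => [|x p IH] [|y q] //=.
by case: (excluded_middle_informative (x = y)) => //= _; rewrite -IH.
Qed.

Lemma gcp_taker p q : gcp p q = take (size (gcp p q)) q.
Proof. rewrite gcpC; exact: gcp_takel. Qed.

Lemma size_gcpl p q : size (gcp p q) <= size p.
Proof. by rewrite {1}gcp_takel size_take_min geq_minr. Qed.

Lemma size_gcpr p q : size (gcp p q) <= size q.
Proof. by rewrite gcpC size_gcpl. Qed.

Lemma take_gcp i p q : i <= size (gcp p q) -> take i p = take i q.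
Proof.
by move=> le_i; rewrite -(take_takel p le_i) -gcp_takel gcp_taker take_takel.
Qed.

Lemma leq_size_gcp n p q :
  n <= size p -> n <= size q -> take n p = take n q -> n <= size (gcp p q).
Proof.
elim: n p q => [|n IH] [|x p] [|y q] //= le_p le_q [<- e_take].
by case: (excluded_middle_informative (x = x)) => //= _; apply: IH.
Qed.

Lemma gcp_catr p s : gcp p (p ++ s) = p.
Proof.
elim: p => [|x p IH] //=.
by case: (excluded_middle_informative (x = x)) => //= _; rewrite IH.
Qed.

Lemma gcp_id p : gcp p p = p.
Proof. by rewrite -{2}(cats0 p) gcp_catr. Qed.

End GreatestCommonPrefix.

Section Similarity.
Variable A : Type.
Implicit Types (p q r s : seq (A -> Prop)) (a : A).

Lemma on_path_leq r r' p a :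
  size r <= size r' -> on_path r p a -> on_path r' p a.
Proof. by move=> le_r path_r i /andP[le_i ge_i]; apply: path_r; lia. Qed.

Lemma on_path_id p a : lastS p a -> on_path p p a.
Proof.
move=> pa i /andP[le_i ge_i].
have -> : i = size p by lia.
by rewrite take_size.
Qed.

Lemma sim_refl p a : p <> [::] -> lastS p a -> sim (p, a) (p, a).
Proof. by move=> p_ne pa; split=> //=; rewrite gcp_id //; exact: on_path_id. Qed.

Lemma sim_sym (x y : seq (A -> Prop) * A) : sim x y -> sim y x.
Proof. by case=> e_xy; split; rewrite // gcpC. Qed.

Lemma sim_rcons p X a : p <> [::] -> lastS p a -> X a -> sim (p, a) (rcons p X, a).
Proof.
move=> p_ne pa Xa; split; rewrite //= -cats1 gcp_catr //; first exact: on_path_id.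
move=> i; rewrite size_cat /= => /andP[le_i ge_i].
have [->|->] : i = size p \/ i = size p + 1 by lia.
- by rewrite take_size_cat.
- by rewrite take_oversize ?size_cat // /lastS cats1 last_rcons.
Qed.

Lemma sim_trans (x y z : seq (A -> Prop) * A) : sim x y -> sim y z -> sim x z.
Proof.
wlog le_xy_yz : x y z / size (gcp x.1 y.1) <= size (gcp y.1 z.1).
  move=> W sim_xy sim_yz.
  have [le|/ltnW le] := leqP (size (gcp x.1 y.1)) (size (gcp y.1 z.1)).
    exact: W le sim_xy sim_yz.
  apply: sim_sym; apply: (W z y x).
  - by rewrite gcpC [gcp y.1 x.1]gcpC.
  - exact: sim_sym.
  - exact: sim_sym.
case: x y z le_xy_yz => [p a] [q b] [s c] /= le.
case=> /= <- pq_ne path_p path_q [/= <- _ _ path_s].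
have m_pos : 0 < size (gcp p q) by case: (gcp p q) pq_ne.
have le_ps : size (gcp p q) <= size (gcp p s).
  apply: leq_size_gcp; first exact: size_gcpl.
  - exact: leq_trans le (size_gcpr q s).
  - by rewrite (take_gcp (leqnn _)) (take_gcp le).
split=> //.
- by case: (gcp p s) le_ps; rewrite //= leqNgt m_pos.
- exact: on_path_leq path_p.
move=> i /andP[/= le_i ge_i] /=; case: (leqP (size (gcp q s)) i) => [ge_qs|lt_qs].
- by apply: path_s; rewrite ge_qs ge_i.
- rewrite -(take_gcp (ltnW lt_qs)); apply: path_q.
  by have := size_gcpl q s; lia.
Qed.

End Similarity.

Section Plays.
Variables (Sym : Type) (ar : Sym -> nat) (g : guard) (k : nat) (A : structure ar).
Implicit Types (p : seq (A -> Prop)) (X : A -> Prop).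

Lemma isplay_take p n : isplay g k p -> 0 < n -> isplay g k (take n p).
Proof.
case=> p_ne p_guarded n_pos; split; first by case: p p_ne {p_guarded}; case: n n_pos.
by move: p_guarded; rewrite -{1}(cat_take_drop n p) => /List.Forall_app[].
Qed.

Lemma isplay_rcons p X : isplay g k p -> kguarded g k X -> isplay g k (rcons p X).
Proof.
case=> _ p_guarded X_guarded; split; first by case: p {p_guarded}.
by rewrite -cats1; apply/List.Forall_app; split; last constructor.
Qed.

Lemma kguarded_lastS p : isplay g k p -> kguarded g k (lastS p).
Proof.
case: p => [[]//|X p [_]]; rewrite /lastS /= lastI -cats1.
by case/List.Forall_app=> _ last_guarded; exact: List.Forall_inv last_guarded.
Qed.

Lemma rel_guarded R (t : 'I_(ar R) -> A) : Defs.rel t -> guarded_tuple g t.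
Proof.
move=> rt; case: g => /=; first by right; exists R, t.
by move=> i j; right; exists R, t; split=> //; [exists i | exists j].
Qed.

End Plays.

Section GuardedImage.
Variables (Sym : Type) (ar : Sym -> nat) (A B : structure ar).
Variables (S : A -> Prop) (f : forall a, S a -> B).
Hypothesis f_rel : forall R (b : 'I_(ar R) -> A) (Sb : forall j, S (b j)),
  Defs.rel b -> Defs.rel (fun j => f (Sb j)).

Let f_congr a a' (Sa : S a) (Sa' : S a') : a = a' -> f Sa = f Sa'.
Proof. by move=> e; subst a'; rewrite (proof_irrelevance _ Sa Sa'). Qed.

Variables (n : nat) (t : 'I_n -> A) (St : forall i, S (t i)).

Let supp_S x : supp t x -> S x.
Proof. by case=> i <-. Qed.

Lemma atom_guarded_image : atom_guarded t -> atom_guarded (fun i => f (St i)).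
Proof.
case=> [[a0 supp_a0] | [R [b [rb supp_b]]]].
- left; exists (f (supp_S ((supp_a0 a0).2 erefl))) => y; split.
  + by case=> i <-; apply: f_congr; apply/supp_a0; exists i.
  + by move=> ->; have [i ei] := (supp_a0 a0).2 erefl; exists i; apply: f_congr.
- have Sb j : S (b j) by apply/supp_S/supp_b; exists j.
  right; exists R, (fun j => f (Sb j)); split; first exact: f_rel.
  move=> y; split.
  + case=> j <-; have [i ei] := (supp_b (b j)).1 (ex_intro _ j erefl).
    by exists i; apply: f_congr.
  + case=> i <-; have [j ej] := (supp_b (t i)).2 (ex_intro _ i erefl).
    by exists j; apply: f_congr.
Qed.

Lemma loose_guarded_image : loose_guarded t -> loose_guarded (fun i => f (St i)).
Proof.
move=> t_loose i j; case: (t_loose i j) => [e | [R [b [rb sub_b [i' ei'] [j' ej']]]]].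
  by left; apply: f_congr.
have Sb l : S (b l) by apply/supp_S/sub_b; exists l.
right; exists R, (fun j => f (Sb j)); split.
- exact: f_rel.
- move=> y [l <-]; have [m e_m] := sub_b (b l) (ex_intro _ l erefl).
  by exists m; apply: f_congr.
- by exists i'; apply: f_congr.
- by exists j'; apply: f_congr.
Qed.

Lemma guarded_image g : guarded_tuple g t -> guarded_tuple g (fun i => f (St i)).
Proof. by case: g; [exact: atom_guarded_image | exact: loose_guarded_image]. Qed.

End GuardedImage.

Section Correspondence.
Variables (Sym : Type) (ar : Sym -> nat) (g : guard) (k : nat) (A B : structure ar).

Local Notation GA := (GG g k A).
Local Notation playA := (play g k A).
Local Notation fplayA := (fplay g k A).

Definition class_of (x : fplayA) : GA := exist _ (cls x) (ex_intro _ x erefl).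

Definition focus (p : playA) a (pa : lastS (sval p) a) : fplayA :=
  exist _ (sval p, a) (conj (svalP p) pa).

Definition class_repr (c : GA) : fplayA :=
  proj1_sig (constructive_indefinite_description _ (svalP c)).

Lemma fplay_sim_refl (x : fplayA) : sim (sval x) (sval x).
Proof. by case: x => -[p a] /= [[p_ne _] pa]; exact: sim_refl. Qed.

Lemma class_of_sim (x y : fplayA) : sim (sval x) (sval y) -> class_of x = class_of y.
Proof.
move=> sim_xy; apply: sval_inj; apply: functional_extensionality => z.
apply: propositional_extensionality; split.
- exact: sim_trans (sim_sym sim_xy).
- exact: sim_trans sim_xy.
Qed.

Lemma sim_class_of (x y : fplayA) : class_of x = class_of y -> sim (sval x) (sval y).
Proof.
move=> e_xy; have := congr1 (fun c : GA => sval c y) e_xy; rewrite /= /cls => ->.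
exact: fplay_sim_refl.
Qed.

Lemma class_reprK : cancel class_repr class_of.
Proof.
move=> c; apply: sval_inj; rewrite /class_repr /=.
by case: constructive_indefinite_description.
Qed.

Definition answer (s : strategy g k A B) (x : fplayA) : B :=
  s (exist _ (sval x).1 (proj1 (svalP x))) (sval x).2 (proj2 (svalP x)).

Lemma strategy_congr (s : strategy g k A B) (p q : playA) a b pa qb :
  sval p = sval q -> a = b -> s p a pa = s q b qb.
Proof.
case: p pa => [p p_play] pa; case: q qb => [q q_play] qb /= e_pq e_ab; subst q b.
by rewrite (proof_irrelevance _ q_play p_play) (proof_irrelevance _ qb pa).
Qed.

Lemma answer_focus (s : strategy g k A B) (p : playA) a (pa : lastS (sval p) a) :
  answer s (focus pa) = s p a pa.
Proof.
exact: (@strategy_congr s (exist _ _ (proj1 (svalP (focus pa)))) p _ _ _ pa erefl erefl).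
Qed.

Lemma winning_prefix (s : strategy g k A B) (p r : playA) a
    (pa : lastS (sval p) a) (ra : lastS (sval r) a) :
  winning s -> sval r = take (size (sval r)) (sval p) -> on_path (sval r) (sval p) a ->
  s p a pa = s r a ra.
Proof.
case=> _ _ coherent; case: p pa => p p_play /= pa.
elim/last_ind: p p_play pa => [[]//|p X IH] pX_play pa r_pre path.
have take_p i : i <= size p -> take i (rcons p X) = take i p.
  by move=> le_i; rewrite -cats1 takel_cat.
have [e_size | lt_size] := eqVneq (size (sval r)) (size (rcons p X)).
  apply: (@strategy_congr s (exist _ _ pX_play) r _ _ pa ra) => //=.
  by rewrite r_pre e_size take_size.
have le_r : size (sval r) <= size p.
  have : size (sval r) <= size (rcons p X) by rewrite {1}r_pre size_take_min geq_minr.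
  by rewrite leq_eqVlt (negPf lt_size) size_rcons ltnS.
have r_pos : 0 < size (sval r) by case: (svalP r); case: (sval r).
have p_play : isplay g k p.
  by have := isplay_take pX_play (leq_trans r_pos le_r); rewrite take_p // take_size.
have pa' : lastS p a.
  by have := path (size p); rewrite take_p // take_size; apply; rewrite le_r size_rcons leqnSn.
rewrite (coherent (exist _ p p_play) (exist _ _ pX_play) X erefl a pa' pa).
apply: IH; first by rewrite -take_p.
move=> i /andP[le_i ge_i]; rewrite -take_p //.
by apply: path; rewrite le_i size_rcons (leq_trans ge_i).
Qed.

Lemma answer_sim (s : strategy g k A B) (x y : fplayA) :
  winning s -> sim (sval x) (sval y) -> answer s x = answer s y.
Proof.
move=> s_win; case: x y => [[p a] [p_play pa]] [[q b] [q_play qb]].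
case=> /= e_ab pq_ne path_p path_q; subst b; rewrite /answer /=.
have r_play : isplay g k (gcp p q).
  by rewrite gcp_takel; apply: isplay_take => //; case: (gcp p q) pq_ne.
have ra : lastS (gcp p q) a.
  by rewrite {1}gcp_takel; apply: path_p; rewrite leqnn size_gcpl.
transitivity (s (exist _ _ r_play) a ra).
- by apply: (@winning_prefix s) => //=; exact: gcp_takel.
- by symmetry; apply: (@winning_prefix s) => //=; exact: gcp_taker.
Qed.

Definition strategy_of_hom (h : hom GA B) : strategy g k A B :=
  fun p a pa => sval h (class_of (focus pa)).

Lemma answer_strategy_of_hom h x : answer (strategy_of_hom h) x = sval h (class_of x).
Proof.
congr (sval h _); apply: class_of_sim.
by case: x => -[p a] [[p_ne _] pa] /=; exact: sim_refl.
Qed.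

Section HomToStrategy.
Variable h : hom GA B.

Lemma strategy_of_hom_rel (p : playA) R (t : 'I_(ar R) -> A)
    (pt : forall i, lastS (sval p) (t i)) :
  Defs.rel t -> Defs.rel (fun i => strategy_of_hom h (pt i)).
Proof.
by move=> rt; apply: (svalP h); exists (sval p), t, (fun i => conj (svalP p) (pt i)).
Qed.

Lemma strategy_of_hom_coherent (p p' : playA) X :
  sval p' = rcons (sval p) X -> forall a (pa : lastS (sval p) a) (pa' : lastS (sval p') a),
  strategy_of_hom h pa' = strategy_of_hom h pa.
Proof.
move=> e_p' a pa pa'; congr (sval h _); apply/class_of_sim/sim_sym => /=; rewrite e_p'.
apply: sim_rcons => //; first exact: (proj1 (svalP p)).
by move: pa'; rewrite e_p' /lastS last_rcons.
Qed.

Lemma strategy_of_hom_guarded (p : playA) :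
  exists Y : B -> Prop, kguarded g k Y /\
    forall a (pa : lastS (sval p) a), Y (strategy_of_hom h pa).
Proof.
have [n [t [le_n [t_guarded last_t]]]] := kguarded_lastS (svalP p).
have q_play : isplay g k (rcons (sval p) (supp t)).
  by apply: isplay_rcons (svalP p) _; exists n, t.
pose q : playA := exist _ _ q_play.
have qt i : lastS (sval q) (t i) by rewrite /lastS last_rcons; exists i.
exists (supp (fun i => strategy_of_hom h (qt i))); split.
- exists n, (fun i => strategy_of_hom h (qt i)); split=> //; split=> //.
  exact: (guarded_image (@strategy_of_hom_rel q)) t_guarded.
- move=> a pa; have [i e_ti] := last_t a pa; exists i; subst a.
  exact: strategy_of_hom_coherent.
Qed.

Lemma strategy_of_hom_winning : winning (strategy_of_hom h).
Proof.
split; [exact: strategy_of_hom_guarded | exact: strategy_of_hom_rel |].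
exact: strategy_of_hom_coherent.
Qed.

End HomToStrategy.

Definition wstrat_of_hom (h : hom GA B) : wstrat g k A B :=
  exist _ _ (strategy_of_hom_winning h).

Definition strategy_map (s : wstrat g k A B) (c : GA) : B := answer (sval s) (class_repr c).

Lemma strategy_map_class (s : wstrat g k A B) x :
  strategy_map s (class_of x) = answer (sval s) x.
Proof. by apply: (answer_sim (svalP s)); apply: sim_class_of; rewrite class_reprK. Qed.

(* For a nullary symbol the witness list of [Grel] need not be a play. *)
Lemma Grel_play R (c : 'I_(ar R) -> GA) : Defs.rel c ->
  exists (p : playA) (t : 'I_(ar R) -> A) (pt : forall i, lastS (sval p) (t i)),
    (forall i, c i = class_of (focus (pt i))) /\ Defs.rel t.
Proof.
case=> p [t [pt [c_t rt]]]; have [ar0 | ar_pos] := posnP (ar R).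
- have t_guarded : kguarded g k (supp t).
    by exists (ar R), t; split; [rewrite ar0 | split=> //; exact: rel_guarded rt].
  have q_play : isplay g k [:: supp t] by split=> //; constructor.
  exists (exist _ _ q_play), t, (fun i => ex_intro _ i erefl : supp t (t i)).
  by split=> // -[i lt_i]; exfalso; rewrite ar0 in lt_i.
- exists (exist _ p (proj1 (pt (Ordinal ar_pos)))), t, (fun i => proj2 (pt i)).
  split=> // i; apply: sval_inj; rewrite /= c_t; congr cls; exact: sval_inj.
Qed.

Lemma strategy_map_is_hom (s : wstrat g k A B) : is_hom (strategy_map s).
Proof.
move=> R c /Grel_play[p [t [pt [c_t rt]]]].
have -> : (fun i => strategy_map s (c i)) = (fun i => sval s p (t i) (pt i)).
  by apply: functional_extensionality => i; rewrite c_t strategy_map_class answer_focus.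
by case: (svalP s) => _ s_rel _; exact: s_rel.
Qed.

Definition hom_of_wstrat (s : wstrat g k A B) : hom GA B :=
  exist _ _ (strategy_map_is_hom s).

Lemma wstrat_of_homK : cancel wstrat_of_hom hom_of_wstrat.
Proof.
move=> h; apply: sval_inj; apply: functional_extensionality => c.
by rewrite -[in RHS](class_reprK c) -answer_strategy_of_hom.
Qed.

Lemma hom_of_wstratK : cancel hom_of_wstrat wstrat_of_hom.
Proof.
move=> s; apply: sval_inj; do 3 apply: functional_extensionality_dep => ?.
by rewrite /= /strategy_of_hom strategy_map_class answer_focus.
Qed.

End Correspondence.

Theorem theorem3p8 (Sym : Type) (ar : Sym -> nat) (g : guard) (k : nat)
  (A B : structure ar) :
  0 < k ->
  (exists f : hom (GG g k A) B -> wstrat g k A B, bijective f) /\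
  (simulates g k A B <-> inhabited (hom (GG g k A) B)).
Proof.
(* The correspondence holds for k = 0 as well. *)
move=> _; split.
- exists (@wstrat_of_hom _ _ g k A B).
  exact: Bijective (@wstrat_of_homK _ _ g k A B) (@hom_of_wstratK _ _ g k A B).
- by split=> -[x]; constructor; [exact: hom_of_wstrat x | exact: wstrat_of_hom x].
Qed.
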